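(* Let $E,F$ be normed spaces over $\mathbb K$, $F$ spherically complete, and $f\colon E\to F$ a linear isometry. Let $S$ be the set of linear subspaces $M\subseteq F$ with $\operatorname{Im}(f)\subseteq M$ such that the inclusion $\operatorname{Im}(f)\hookrightarrow M$ is immediate. Then (1) $S$ has a maximal element with respect to inclusion; (2) for any maximal element $\breve E$ of $S$, the space $\breve E$ together with the linear isometry $E\to\breve E$, $x\mapsto f(x)$, is a spherical completion of $E$.
   Context: $\mathbb K$: nontrivially normed field with ultrametric absolute value; normed space over $\mathbb K$: normed vector space with $\|x+y\|\le\max(\|x\|,\|y\|)$. $x\perp_m V$ means $\|x\|=\inf_{v\in V}\|x-v\|$. A linear isometry $f\colon E\to F$ is immediate if the only $v\in F$ with $v\perp_m\operatorname{Im}(f)$ is $0$. Spherically complete: every decreasing sequence of closed balls (radii $\ge0$) has nonempty intersection. A spherical completion of $E$ is a spherically complete normed space $\breve E$ over $\mathbb K$ with a linear isometry $i\colon E\to\breve E$ such that no proper spherically complete linear subspace of $\breve E$ contains $i(E)$. *)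

From HB Require Import structures.
From mathcomp Require Import all_boot all_order all_algebra.
From mathcomp Require Import boolp classical_sets reals.
Set Implicit Arguments. Unset Strict Implicit. Unset Printing Implicit Defensive.
Import Order.TTheory GRing.Theory Num.Theory.
Local Open Scope ring_scope.
Local Open Scope classical_set_scope.

Section Defs.
Variable R : realType.

Definition ultra_abs (K : fieldType) (a : K -> R) : Prop :=
  [/\ (forall x, 0 <= a x), (forall x, a x = 0 <-> x = 0),
      (forall x y, a (x * y) = a x * a y) &
      (forall x y, a (x + y) <= Num.max (a x) (a y))].

Definition nontrivial_abs (K : fieldType) (a : K -> R) : Prop :=
  exists x, a x <> 0 /\ a x <> 1.

Definition ultra_norm (K : fieldType) (a : K -> R) (V : lmodType K)
    (nrm : V -> R) : Prop :=
  [/\ (forall x, nrm x = 0 <-> x = 0),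
      (forall (c : K) x, nrm (c *: x) = a c * nrm x) &
      (forall x y, nrm (x + y) <= Num.max (nrm x) (nrm y))].

Definition lin_subspace (K : fieldType) (V : lmodType K) (M : set V) : Prop :=
  [/\ M 0, (forall x y, M x -> M y -> M (x + y)) &
      (forall (c : K) x, M x -> M (c *: x))].

Definition cball_in (K : fieldType) (V : lmodType K) (nrm : V -> R)
    (M : set V) (c : V) (r : R) : set V :=
  [set x | M x /\ nrm (x - c) <= r].

Definition sph_complete (K : fieldType) (V : lmodType K) (nrm : V -> R)
    (M : set V) : Prop :=
  forall (c : nat -> V) (r : nat -> R),
    (forall n, M (c n)) -> (forall n, 0 <= r n) ->
    (forall n, cball_in nrm M (c n.+1) (r n.+1) `<=` cball_in nrm M (c n) (r n)) ->
    exists x, forall n, cball_in nrm M (c n) (r n) x.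

Definition orth_m (K : fieldType) (V : lmodType K) (nrm : V -> R)
    (x : V) (W : set V) : Prop :=
  nrm x = inf [set nrm (x - w) | w in W].

Definition immediate_incl (K : fieldType) (V : lmodType K) (nrm : V -> R)
    (W M : set V) : Prop :=
  forall v, M v -> orth_m nrm v W -> v = 0.

Definition sph_completion (K : fieldType) (E F : lmodType K)
    (nE : E -> R) (nF : F -> R) (f : E -> F) (M : set F) : Prop :=
  [/\ lin_subspace M, (forall x, M (f x)), linear f,
      (forall x, nF (f x) = nE x) & sph_complete nF M] /\
      (forall N, lin_subspace N -> N `<=` M -> range f `<=` N ->
         sph_complete nF N -> N = M).

End Defs.

(* By Zorn's lemma there is a maximal immediate extension M of Im f inside F.
   M is spherically complete: if a nested sequence of balls of M had empty
   intersection, spherical completeness of F would give a point y of F lying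
   in all of them; such a y has no best approximation in M, so M + K y is
   still an immediate extension of Im f, contradicting maximality.
   M is minimal: if N is spherically complete with Im f <= N <= M, every v in M
   has a best approximation x in N; then v - x is orthogonal to N, hence to
   Im f, and immediacy forces v = x. *)

From HB Require Import structures.
From mathcomp Require Import all_boot all_order all_algebra.
From mathcomp Require Import boolp classical_sets reals.
Set Implicit Arguments. Unset Strict Implicit. Unset Printing Implicit Defensive.
Import Order.TTheory GRing.Theory Num.Theory.
Local Open Scope ring_scope.
Local Open Scope classical_set_scope.

Section UltrametricNormedSpace.
Variables (R : realType) (K : fieldType) (a : K -> R) (V : lmodType K)
  (nrm : V -> R).
Hypotheses (ha : ultra_abs a) (hn : ultra_norm a nrm).

Lemma ultra_abs1 : a 1 = 1.
Proof.
case: ha => _ a_eq0 aM _.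
have a1M : a 1 * a 1 = a 1 * 1 by rewrite -aM !mulr1.
by apply: (mulfI _ a1M); apply/eqP => /a_eq0/eqP; rewrite oner_eq0.
Qed.

Lemma ultra_absN1 : a (-1) = 1.
Proof.
case: ha => a_ge0 _ aM _.
have /eqP : a (-1) ^+ 2 = 1 by rewrite expr2 -aM mulrNN mulr1 ultra_abs1.
rewrite sqrf_eq1 => /orP[/eqP //|/eqP aN1].
by have := a_ge0 (-1); rewrite aN1 ler0N1.
Qed.

Lemma ultra_abs_gt0 c : c != 0 -> 0 < a c.
Proof.
case: ha => a_ge0 a_eq0 _ _ c0; rewrite lt_def a_ge0 andbT.
by apply: contra_neq c0 => /a_eq0.
Qed.

Lemma unorm0 : nrm 0 = 0.
Proof. by case: hn => n_eq0 _ _; exact/n_eq0. Qed.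

Lemma unormZ c x : nrm (c *: x) = a c * nrm x.
Proof. by case: hn. Qed.

Lemma unormN x : nrm (- x) = nrm x.
Proof. by rewrite -scaleN1r unormZ ultra_absN1 mul1r. Qed.

Lemma unorm_distC x y : nrm (x - y) = nrm (y - x).
Proof. by rewrite -unormN opprB. Qed.

Lemma unormD_le_max x y : nrm (x + y) <= Num.max (nrm x) (nrm y).
Proof. by case: hn. Qed.

Lemma unorm_ge0 x : 0 <= nrm x.
Proof. by have := unormD_le_max x (- x); rewrite subrr unorm0 unormN maxxx. Qed.

Lemma unorm_gt0 x : x <> 0 -> 0 < nrm x.
Proof.
case: hn => n_eq0 _ _ x0; rewrite lt_def unorm_ge0 andbT.
by apply/eqP => /n_eq0.
Qed.

Lemma unorm_trans_le x y z r :
  nrm (x - y) <= r -> nrm (y - z) <= r -> nrm (x - z) <= r.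
Proof.
move=> xy yz; have := unormD_le_max (x - y) (y - z); rewrite addrA subrK.
by move/le_trans; apply; rewrite ge_max xy yz.
Qed.

Lemma unorm_trans_lt x y z r :
  nrm (x - y) < r -> nrm (y - z) < r -> nrm (x - z) < r.
Proof.
move=> xy yz; have := unormD_le_max (x - y) (y - z); rewrite addrA subrK.
by move/le_lt_trans; apply; rewrite gt_max xy yz.
Qed.

Lemma unorm_isosceles x y : nrm (x - y) < nrm x -> nrm y = nrm x.
Proof.
move=> xy; apply/eqP; rewrite eq_le; apply/andP; split.
  have := unormD_le_max x (y - x); rewrite addrCA subrr addr0 (unorm_distC y).
  by move/le_trans; apply; rewrite ge_max lexx (ltW xy).
have := unormD_le_max (x - y) y; rewrite subrK le_max => /orP[xlexy|//].
by have := le_lt_trans xlexy xy; rewrite ltxx.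
Qed.

Lemma has_inf_dist v (W : set V) : W !=set0 -> has_inf [set nrm (v - w) | w in W].
Proof.
move=> [w0 Ww0]; split; first by exists (nrm (v - w0)), w0.
by exists 0 => _ [w _ <-]; exact: unorm_ge0.
Qed.

Lemma orth_mP v (W : set V) :
  W 0 -> orth_m nrm v W <-> (forall w, W w -> nrm v <= nrm (v - w)).
Proof.
move=> W0; have [W_ne W_lb] := has_inf_dist v (ex_intro _ 0 W0).
rewrite /orth_m; split=> [-> w Ww|v_le]; first by apply: (ge_inf W_lb); exists w.
apply/eqP; rewrite eq_le; apply/andP; split.
  by apply: lb_le_inf W_ne _ => _ [w Ww <-]; exact: v_le.
by rewrite -{2}(subr0 v); apply: (ge_inf W_lb); exists 0.
Qed.

Lemma immediate_inclP (W M : set V) : W 0 ->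
  immediate_incl nrm W M <->
  (forall v, M v -> v <> 0 -> exists2 w, W w & nrm (v - w) < nrm v).
Proof.
move=> W0; split=> [imm v Mv v0 | closer v Mv /(orth_mP v W0) v_orth].
  apply: contrapT => no_w; apply/v0/imm => //; apply/(orth_mP v W0) => w Ww.
  by rewrite leNgt; apply/negP => lt_vw; apply: no_w; exists w.
apply: contrapT => v0; have [w Ww] := closer v Mv v0.
by rewrite ltNge v_orth.
Qed.

Lemma immediate_incl_refl (W : set V) : W 0 -> immediate_incl nrm W W.
Proof.
move=> W0 v Wv /(orth_mP v W0)/(_ v Wv); rewrite subrr unorm0 => v_le0.
by apply: contrapT => /unorm_gt0; rewrite ltNge v_le0.
Qed.

Lemma immediate_incl_trans (W M N : set V) : W 0 -> M 0 ->
  immediate_incl nrm W M -> immediate_incl nrm M N -> immediate_incl nrm W N.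
Proof.
move=> W0 M0 /(immediate_inclP _ W0) WM /(immediate_inclP _ M0) MN.
apply/(immediate_inclP _ W0) => v Nv v0.
have [m Mm vm] := MN v Nv v0.
have nm := unorm_isosceles vm.
have m0 : m <> 0 by move=> m0; move: (unorm_gt0 v0); rewrite -nm m0 unorm0 ltxx.
have [w Ww mw] := WM m Mm m0.
by exists w => //; apply: unorm_trans_lt vm _; rewrite -nm.
Qed.

Lemma cball_in_sub (M : set V) c1 c2 r1 r2 : r1 <= r2 -> nrm (c1 - c2) <= r2 ->
  cball_in nrm M c1 r1 `<=` cball_in nrm M c2 r2.
Proof.
move=> r12 c12 x [Mx xc1]; split=> //.
by apply: unorm_trans_le c12; exact: le_trans r12.
Qed.

Definition has_best_approx (M : set V) y :=
  exists2 m, M m & forall m', M m' -> nrm (y - m) <= nrm (y - m').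

Lemma sph_complete_best_approx (N : set V) v : N !=set0 ->
  sph_complete nrm N -> has_best_approx N v.
Proof.
move=> N_ne N_sph; have dist_inf := has_inf_dist v N_ne.
pose d := inf [set nrm (v - w) | w in N].
have d_ge0 : 0 <= d.
  by apply: lb_le_inf dist_inf.1 _ => _ [w _ <-]; exact: unorm_ge0.
have eps_gt0 n : 0 < (n.+1%:R : R)^-1 by rewrite invr_gt0 ltr0Sn.
pose r n := d + (n.+1%:R : R)^-1.
have r_gtd n : d < r n by rewrite ltrDl.
have r_dec n : r n.+1 <= r n.
  by rewrite lerD2l lef_pV2 ?posrE ?ltr0Sn // ler_nat.
have [c c_near] : {c : nat -> V & forall n, N (c n) /\ nrm (v - c n) < r n}.
  apply: (@choice _ _ (fun n w => N w /\ nrm (v - w) < r n)) => n.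
  by have [_ [w Nw <-] lt_w] := inf_adherent (eps_gt0 n) dist_inf; exists w.
have nested n : cball_in nrm N (c n.+1) (r n.+1) `<=` cball_in nrm N (c n) (r n).
  apply: cball_in_sub (r_dec n) _; apply: (@unorm_trans_le _ v).
    by rewrite unorm_distC; exact/ltW/(lt_le_trans (c_near n.+1).2).
  exact/ltW/(c_near n).2.
have [x x_in] := N_sph c r (fun n => (c_near n).1)
  (fun n => le_trans d_ge0 (ltW (r_gtd n))) nested.
exists x; first by have [] := x_in 0%N.
have vx_led : nrm (v - x) <= d.
  rewrite leNgt; apply/negP => /ltr_add_invr[k lt_k].
  suff : nrm (v - x) <= r k by rewrite leNgt lt_k.
  apply: (@unorm_trans_le _ (c k)); first exact/ltW/(c_near k).2.
  by rewrite unorm_distC; have [] := x_in k.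
by move=> w Nw; apply: le_trans vx_led _; apply: (ge_inf dist_inf.2); exists w.
Qed.

Lemma immediate_sph_complete_eq (W M N : set V) : W 0 ->
  immediate_incl nrm W M -> lin_subspace M -> lin_subspace N ->
  N `<=` M -> W `<=` N -> sph_complete nrm N -> N = M.
Proof.
move=> W0 WM [_ MD MZ] [N0 ND _] NM WN N_sph; apply/seteqP; split=> // v Mv.
have [x Nx x_best] := sph_complete_best_approx v (ex_intro _ 0 N0) N_sph.
suff /subr0_eq -> : v - x = 0 by [].
apply: WM; first by rewrite -scaleN1r; apply/MD/MZ/NM.
apply/(orth_mP _ W0) => w Ww; rewrite -addrA -opprD.
by apply/x_best/ND => //; exact: WN.
Qed.

Definition adjoin (M : set V) y := [set m + l *: y | m in M & l in [set: K]].

Lemma lin_subspace_adjoin M y : lin_subspace M -> lin_subspace (adjoin M y).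
Proof.
move=> [M0 MD MZ]; split.
- by exists 0 => //; exists 0 => //; rewrite scale0r addr0.
- move=> _ _ [m1 Mm1 [l1 _ <-]] [m2 Mm2 [l2 _ <-]].
  by exists (m1 + m2); [exact: MD | exists (l1 + l2) => //; rewrite scalerDl addrACA].
- move=> c _ [m Mm [l _ <-]].
  by exists (c *: m); [exact: MZ | exists (c * l) => //; rewrite scalerDr scalerA].
Qed.

Lemma subset_adjoin M y : M `<=` adjoin M y.
Proof. by move=> m Mm; exists m => //; exists 0 => //; rewrite scale0r addr0. Qed.

Lemma adjoin_self M y : M 0 -> adjoin M y y.
Proof. by move=> M0; exists 0 => //; exists 1 => //; rewrite add0r scale1r. Qed.

(* Adjoining a point without best approximation keeps the extension immediate:
   a best approximation of [m0 + l *: y] from M would give one of y. *)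
Lemma immediate_incl_adjoin M y : lin_subspace M -> ~ has_best_approx M y ->
  immediate_incl nrm M (adjoin M y).
Proof.
move=> [M0 MD MZ] no_best; apply/(immediate_inclP _ M0).
move=> _ [m0 Mm0 [l _ <-]]; have [-> v0|l0 _] := eqVneq l 0.
  rewrite scale0r addr0 in v0 *.
  by exists m0 => //; rewrite subrr unorm0; exact: unorm_gt0.
have Mm1 : M (- (l^-1 *: m0)) by rewrite -scaleN1r; apply/MZ/MZ.
have [m2 Mm2 closer] : exists2 m2, M m2 & nrm (y - m2) < nrm (y - - (l^-1 *: m0)).
  apply: contrapT => no_closer; apply: no_best; exists (- (l^-1 *: m0)) => // m Mm.
  by rewrite leNgt; apply/negP => lt_m; apply: no_closer; exists m.
exists (m0 + l *: m2); first exact/MD/MZ.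
have -> : m0 + l *: y - (m0 + l *: m2) = l *: (y - m2).
  by rewrite scalerBr opprD addrACA subrr add0r.
have -> : m0 + l *: y = l *: (y - - (l^-1 *: m0)).
  by rewrite opprK scalerDr scalerA mulfV // scale1r addrC.
by rewrite !unormZ ltr_pM2l ?ultra_abs_gt0.
Qed.

Lemma cball_in_nested (M : set V) (c : nat -> V) (r : nat -> R) :
  (forall n, cball_in nrm M (c n.+1) (r n.+1) `<=` cball_in nrm M (c n) (r n)) ->
  forall n k, (k <= n)%N -> cball_in nrm M (c n) (r n) `<=` cball_in nrm M (c k) (r k).
Proof.
move=> nested; elim=> [|n IH] k; first by rewrite leqn0 => /eqP ->.
rewrite leq_eqVlt => /orP[/eqP -> //|lt_kn] y /nested; exact: IH.
Qed.

(* The balls of F with the same centres need not be nested, since the radii of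
   nested balls of M need not decrease; shrinking them to the running minimum
   of the radii repairs this. *)
Lemma sph_complete_cball_in_point (M : set V) (c : nat -> V) (r : nat -> R) :
  sph_complete nrm setT -> (forall n, M (c n)) -> (forall n, 0 <= r n) ->
  (forall n, cball_in nrm M (c n.+1) (r n.+1) `<=` cball_in nrm M (c n) (r n)) ->
  exists y, forall n, nrm (y - c n) <= r n.
Proof.
move=> V_sph Mc r_ge0 nested.
have c_dist n k : (k <= n)%N -> nrm (c n - c k) <= r k.
  move=> le_kn; suff [] : cball_in nrm M (c k) (r k) (c n) by [].
  by apply: (cball_in_nested nested le_kn); split; rewrite ?subrr ?unorm0.
pose s := fix s n := if n is m.+1 then Num.min (s m) (r n) else r 0%N.
have le_s n x : (forall k, (k <= n)%N -> x <= r k) -> x <= s n.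
  elim: n => [|n IH] x_le /=; first exact: x_le.
  by rewrite le_min x_le // andbT IH // => k le_kn; apply/x_le/leqW.
have s_le_r n : s n <= r n by case: n => //= n; rewrite ge_min lexx orbT.
have s_dec n : s n.+1 <= s n by rewrite /= ge_min lexx.
have nestedV n : cball_in nrm setT (c n.+1) (s n.+1) `<=` cball_in nrm setT (c n) (s n).
  apply: cball_in_sub (s_dec n) _; apply: le_s => k le_kn.
  apply: (@unorm_trans_le _ (c k)); first exact/c_dist/leqW.
  by rewrite unorm_distC; exact: c_dist.
have [y y_in] := V_sph c s (fun=> I) (fun n => le_s n 0 (fun k _ => r_ge0 k)) nestedV.
by exists y => n; have [_ /le_trans] := y_in n; apply; exact: s_le_r.
Qed.

Lemma no_best_approx_of_empty_cap (M : set V) (c : nat -> V) (r : nat -> R) y :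
  (forall n, M (c n)) -> (forall n, nrm (y - c n) <= r n) ->
  ~ (exists m, forall n, cball_in nrm M (c n) (r n) m) -> ~ has_best_approx M y.
Proof.
move=> Mc y_in no_m [m Mm m_best]; apply: no_m; exists m => n; split=> //.
rewrite leNgt; apply/negP => r_lt.
have yc_lt : nrm (y - c n) < nrm (m - c n) := le_lt_trans (y_in n) r_lt.
have := unorm_isosceles (x := m - c n) (y := m - y).
rewrite opprB addrC addrA subrK => /(_ yc_lt); rewrite unorm_distC => my.
by have := m_best _ (Mc n); rewrite my leNgt yc_lt.
Qed.

Lemma maximal_immediate_sph_complete (W M : set V) : W 0 -> W `<=` M ->
  lin_subspace M -> immediate_incl nrm W M -> sph_complete nrm setT ->
  (forall N, lin_subspace N -> W `<=` N -> immediate_incl nrm W N ->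
     M `<=` N -> N = M) ->
  sph_complete nrm M.
Proof.
move=> W0 WM lsM WM_imm V_sph M_max c r Mc r_ge0 nested.
apply: contrapT => no_m.
have [y y_in] := sph_complete_cball_in_point V_sph Mc r_ge0 nested.
have no_best := no_best_approx_of_empty_cap Mc y_in no_m.
have M0 : M 0 by case: lsM.
have eqM : adjoin M y = M.
  apply: M_max; first exact: lin_subspace_adjoin.
  - exact: subset_trans WM (@subset_adjoin M y).
  - exact: immediate_incl_trans W0 M0 WM_imm (immediate_incl_adjoin lsM no_best).
  - exact: subset_adjoin.
apply: no_best; exists y; first by rewrite -eqM; exact: adjoin_self.
by move=> m _; rewrite subrr unorm0 unorm_ge0.
Qed.

Definition immediate_ext (W : set V) :=
  [set M : set V | lin_subspace M /\ W `<=` M /\ immediate_incl nrm W M].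

Lemma immediate_ext_bigcup W (C : set (set V)) : C `<=` immediate_ext W ->
  total_on C subset -> C !=set0 -> immediate_ext W (\bigcup_(Z in C) Z).
Proof.
move=> C_ext C_tot [Z0 CZ0]; have [[Z00 _ _] [WZ0 _]] := C_ext Z0 CZ0.
have common_member x y : (\bigcup_(Z in C) Z) x -> (\bigcup_(Z in C) Z) y ->
    exists2 Z, C Z & Z x /\ Z y.
  move=> [Z1 CZ1 Z1x] [Z2 CZ2 Z2y].
  have [Z12|Z21] := C_tot Z1 Z2 CZ1 CZ2.
    by exists Z2 => //; split=> //; exact: Z12.
  by exists Z1 => //; split=> //; exact: Z21.
split; [split|split].
- by exists Z0.
- move=> x y xC yC; have [Z CZ [Zx Zy]] := common_member x y xC yC.
  by exists Z => //; have [[_ ZD _] _] := C_ext Z CZ; exact: ZD.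
- by move=> k x [Z CZ Zx]; exists Z => //; have [[_ _ ZZ] _] := C_ext Z CZ; exact: ZZ.
- by move=> x Wx; exists Z0 => //; exact: WZ0.
- by move=> v [Z CZ Zv]; have [_ [_ imm]] := C_ext Z CZ; exact: imm.
Qed.

(* The chains of Zorn's lemma may be empty, so W is added to each of them. *)
Lemma exists_maximal_immediate_ext (W : set V) : lin_subspace W ->
  exists M, immediate_ext W M /\
    forall N, immediate_ext W N -> M `<=` N -> N = M.
Proof.
move=> lsW; have W0 : W 0 by case: lsW.
have W_ext : immediate_ext W W by split; last split; last exact: immediate_incl_refl.
pose sub (A B : {M | immediate_ext W M}) := `[< sval A `<=` sval B >].
have [| | | |[M M_ext] M_max] := @Zorn _ sub.
- by move=> ?; exact/asboolP.
- by move=> ? ? ? /asboolP AB /asboolP BC; apply/asboolP; exact: subset_trans BC.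
- by move=> [A ?] [B ?] /asboolP AB /asboolP BA; exact/eq_exist/seteqP.
- move=> A A_tot; pose C := [set Z | Z = W \/ exists2 X, A X & sval X = Z].
  have C_ext : C `<=` immediate_ext W by move=> Z [->|[X _ <-]] //; exact: svalP.
  have C_tot : total_on C subset.
    have WC Z : C Z -> W `<=` Z by move=> /C_ext [_ []].
    move=> Z1 Z2 [->|[X1 AX1 <-]]; first by left; exact: WC.
    move=> [->|[X2 AX2 <-]]; first by right; apply: WC; right; exists X1.
    by have [/asboolP|/asboolP] := A_tot X1 X2 AX1 AX2; [left|right].
  have C_W : C W by left.
  exists (exist _ _ (immediate_ext_bigcup C_ext C_tot (ex_intro _ W C_W))).
  by move=> X AX; apply/asboolP => x Xx; exists (sval X) => //; right; exists X.
- exists M; split=> // N N_ext MN.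
  by have /(congr1 sval) := M_max (exist _ N N_ext) (asboolT MN).
Qed.

End UltrametricNormedSpace.

Theorem proposition6p3 (R : realType) (K : fieldType) (a : K -> R)
  (E F : lmodType K) (nE : E -> R) (nF : F -> R) (f : {linear E -> F}) :
  ultra_abs a -> nontrivial_abs a ->
  ultra_norm a nE -> ultra_norm a nF ->
  sph_complete nF setT ->
  (forall x, nF (f x) = nE x) ->
  let S := [set M : set F | lin_subspace M /\ range f `<=` M /\
                            immediate_incl nF (range f) M] in
  (exists M, S M /\ forall N, S N -> M `<=` N -> N = M) /\
  (forall M, S M -> (forall N, S N -> M `<=` N -> N = M) ->
     sph_completion nE nF f M).
Proof.
move=> ha _ _ hF F_sph f_iso S.
have f0 : range f 0 by exists 0 => //; rewrite linear0.
have ls_f : lin_subspace (range f).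
  split=> // [_ _ [u _ <-] [u' _ <-]|k _ [u _ <-]].
    by exists (u + u') => //; rewrite linearD.
  by exists (k *: u) => //; rewrite linearZ.
split; first exact: exists_maximal_immediate_ext ha hF _ ls_f.
move=> M [lsM [fM f_imm]] M_max; split; first split=> //.
- by move=> x; apply: fM; exists x.
- exact: linearP.
- apply: maximal_immediate_sph_complete ha hF _ _ f0 fM lsM f_imm F_sph _.
  by move=> N lsN fN N_imm MN; apply: M_max.
- move=> N lsN NM fN.
  exact: immediate_sph_complete_eq ha hF _ _ _ f0 f_imm lsM lsN NM fN.
Qed.
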